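(* Let $\zeta\in\mathbb{C}^*$. The set $\{\mathcal{S}_{\frac rs}(\zeta) : \frac rs>1\}$ (which equals $\{\mathcal{R}_{\frac rs}(\zeta) : \frac rs>1\}$) is finite if and only if $\zeta$ is a primitive $n$-th root of unity for some $n\in\{2,3,4,5\}$.
   Context: Let $q$ be a formal parameter, $R_q=\begin{pmatrix} q & 1\\ 0 & 1\end{pmatrix}$, $S_q=\begin{pmatrix} 0 & -q^{-1}\\ 1 & 0\end{pmatrix}$, and for integers $c_1,\dots,c_k$ put $M_q(c_1,\dots,c_k)=R_q^{c_1}S_q\cdots R_q^{c_k}S_q$. Every irreducible fraction $\frac{r}{s}>1$ ($r,s$ positive coprime integers) has a unique negative continued fraction expansion $\frac{r}{s}=c_1-\cfrac{1}{c_2-\cfrac{1}{\ddots-\cfrac{1}{c_k}}}$ with all $c_i\ge 2$; define polynomials $\mathcal{R}_{\frac rs}(q),\mathcal{S}_{\frac rs}(q)$ by $M_q(c_1,\dots,c_k)=\begin{pmatrix}\mathcal{R}_{\frac rs}(q) & *\\ \mathcal{S}_{\frac rs}(q) & *\end{pmatrix}$. *)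

From HB Require Import structures.
From mathcomp Require Import all_boot all_order all_algebra.
From mathcomp Require Import complex.
From mathcomp Require Import Rstruct.
From Stdlib Require Rdefinitions.
Set Implicit Arguments. Unset Strict Implicit. Unset Printing Implicit Defensive.
Import Order.TTheory GRing.Theory Num.Theory.
Local Open Scope ring_scope.

Definition CC : fieldType := complex Rdefinitions.R.

Section QMatrices.
Variable F : fieldType.

(* R_q = [[q, 1], [0, 1]] *)
Definition Rq (q : F) : 'M[F]_2 :=
  \matrix_(i < 2, j < 2)
    if val i == 0%N then (if val j == 0%N then q else 1) else (if val j == 0%N then 0 else 1).

(* S_q = [[0, -q^-1], [1, 0]] *)
Definition Sq (q : F) : 'M[F]_2 :=
  \matrix_(i < 2, j < 2)
    if val i == 0%N then (if val j == 0%N then 0 else - q^-1) else (if val j == 0%N then 1 else 0).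

Definition Mq (q : F) (c : seq nat) : 'M[F]_2 :=
  foldr (fun ci M => (Rq q ^+ ci) * Sq q * M) 1 c.

(* R_{r/s}(q) and S_{r/s}(q) for a given expansion c : the (1,1) and (2,1) entries. *)
Definition Rpoly (q : F) (c : seq nat) : F := Mq q c ord0 ord0.
Definition Spoly (q : F) (c : seq nat) : F := Mq q c ord_max ord0.
End QMatrices.

Fixpoint negcf (c : seq nat) : rat :=
  match c with
  | [::] => 0
  | [:: a] => a%:R
  | a :: t => a%:R - (negcf t)^-1
  end.

(* c is the negative continued fraction expansion of x (all c_i >= 2, k >= 1).
   Such an expansion exists and is unique for every rational x > 1. *)
Definition is_negcf_expansion (x : rat) (c : seq nat) : Prop :=
  [/\ (0 < size c)%N, all (fun ci => 2 <= ci)%N c & negcf c = x].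

Definition S_values (zeta : CC) : CC -> Prop :=
  fun z => exists (x : rat) (c : seq nat),
      1 < x /\ is_negcf_expansion x c /\ z = Spoly zeta c.

Definition finite_subset (A : CC -> Prop) : Prop :=
  exists l : seq CC, forall z, A z -> z \in l.

(* If zeta is not a root of unity, or zeta = 1, the values
   S(2,...,2) = [k]_zeta are pairwise distinct.  If zeta is a primitive n-th
   root of unity with n >= 6, the values R(3,...,3) are rational polynomials
   in zeta, and every rational polynomial vanishing at zeta is divisible by
   Phi_n; so any coincidence among them also holds at w = e^(2 pi i / n).
   There, since [3]_w = w (1 + 2 cos(2 pi / n)), the k-th value is w^k U_k
   where U_k is the Chebyshev-type sequence U_(k+2) = t U_(k+1) - U_k with
   t >= 2, which is strictly increasing: the values are pairwise distinct.
   For n in {2, 3, 4, 5}, the first column of R^a S depends only on a mod n,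
   and the first columns of all M_zeta(c) form a finite orbit, computed in
   Z[x]/([n]_x). *)

From Stdlib Require Import Rdefinitions RIneq Rtrigo1 Rtrigo_calc Classical.
From HB Require Import structures.
From mathcomp Require Import all_boot all_order all_algebra all_field.
From mathcomp Require Import complex Rstruct.
From mathcomp Require Import ring lra.
Import Order.TTheory GRing.Theory Num.Theory.
Set Implicit Arguments. Unset Strict Implicit. Unset Printing Implicit Defensive.
Local Open Scope ring_scope.

Section QNat.
Variable R : pzRingType.
Implicit Types (q : R) (a b : nat).

Definition qnat q a : R := \sum_(i < a) q ^+ i.

Lemma qnat0 q : qnat q 0 = 0.
Proof. exact: big_ord0. Qed.

Lemma qnatS q a : qnat q a.+1 = 1 + q * qnat q a.
Proof.
by rewrite /qnat big_ord_recl mulr_sumr; congr (_ + _); apply: eq_bigr => i; rewrite exprS.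
Qed.

Lemma qnatSr q a : qnat q a.+1 = qnat q a + q ^+ a.
Proof. exact: big_ord_recr. Qed.

Lemma qnatD q a b : qnat q (a + b) = qnat q a + q ^+ a * qnat q b.
Proof.
by rewrite /qnat big_split_ord mulr_sumr; congr (_ + _); apply: eq_bigr => i; rewrite exprD.
Qed.

Lemma qnat_eq0_exprn q a : qnat q a = 0 -> q ^+ a = 1.
Proof. by move=> qa0; apply/eqP; rewrite -subr_eq0 subrX1 -/(qnat q a) qa0 mulr0. Qed.

Lemma qnat1 a : qnat 1 a = a%:R.
Proof. by rewrite /qnat (eq_bigr (fun=> 1)) => [|i _]; rewrite ?sumr_const ?card_ord ?expr1n. Qed.

End QNat.

Lemma rmorph_qnat (R S : pzRingType) (f : {rmorphism R -> S}) q a :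
  f (qnat q a) = qnat (f q) a.
Proof. by rewrite rmorph_sum; apply: eq_bigr => i _; rewrite rmorphXn. Qed.

Lemma qnat_prim_root_eq0 (R : idomainType) n (z : R) :
  n.-primitive_root z -> (1 < n)%N -> qnat z n = 0.
Proof.
move=> prim n_gt1; have z_neq1 : z - 1 != 0.
  by rewrite subr_eq0 -[z]expr1 -(prim_order_dvd prim) dvdn1 neq_ltn n_gt1 orbT.
by apply: (mulfI z_neq1); rewrite mulr0 /qnat -subrX1 prim_expr_order // subrr.
Qed.

Lemma qnat_eq0_prim_root (R : numDomainType) m (z : R) :
  (0 < m)%N -> qnat z m = 0 -> exists2 n, (1 < n)%N & n.-primitive_root z.
Proof.
move=> m_gt0 zm0; have [n prim _] := prim_order_exists m_gt0 (qnat_eq0_exprn zm0).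
exists n => //; rewrite ltn_neqAle (prim_order_gt0 prim) andbT.
apply/eqP => n1; move: prim zm0; rewrite -n1 => /prim_expr_order; rewrite expr1 => ->.
by rewrite qnat1 => /eqP; rewrite pnatr_eq0 (gtn_eqF m_gt0).
Qed.

Section FirstColumn.
Variable F : fieldType.
Implicit Types (q : F) (M : 'M[F]_2) (v : F * F).

Definition col0 M : F * F := (M ord0 ord0, M ord_max ord0).

Definition Rq_col q v : F * F := (q * v.1 + v.2, v.2).
Definition Sq_col q v : F * F := (- (q^-1 * v.2), v.1).

Lemma col0_Rq_mul q M : col0 (Rq q * M) = Rq_col q (col0 M).
Proof.
have lift0 : lift ord0 ord0 = ord_max :> 'I_2 by apply: val_inj.
by rewrite /col0 /= !mxE !big_ord_recl !big_ord0 !mxE /= lift0 /Rq_col /=; congr (_, _); ring.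
Qed.

Lemma col0_Sq_mul q M : col0 (Sq q * M) = Sq_col q (col0 M).
Proof.
have lift0 : lift ord0 ord0 = ord_max :> 'I_2 by apply: val_inj.
by rewrite /col0 /= !mxE !big_ord_recl !big_ord0 !mxE /= lift0 /Sq_col /=; congr (_, _); ring.
Qed.

Lemma col0_Mq_nil q : col0 (Mq q [::]) = (1, 0).
Proof. by rewrite /col0 /= !mxE. Qed.

Lemma col0_Mq_cons q a t :
  col0 (Mq q (a :: t)) = iter a (Rq_col q) (Sq_col q (col0 (Mq q t))).
Proof.
rewrite /= -mulrA; elim: a => [|a IHa]; first by rewrite mul1r col0_Sq_mul.
by rewrite exprS -mulrA col0_Rq_mul IHa.
Qed.

Lemma iter_Rq_col q a v : iter a (Rq_col q) v = (q ^+ a * v.1 + qnat q a * v.2, v.2).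
Proof.
elim: a => [|a /= ->]; first by rewrite qnat0 mul1r mul0r addr0; case: v.
by rewrite qnatS exprS /Rq_col /=; congr (_, _); ring.
Qed.

Lemma Rpoly_nil q : Rpoly q [::] = 1.
Proof. by rewrite /Rpoly /= mxE. Qed.

Lemma Spoly_nil q : Spoly q [::] = 0.
Proof. by rewrite /Spoly /= mxE. Qed.

Lemma Rpoly_cons q a t :
  Rpoly q (a :: t) = qnat q a * Rpoly q t - q ^+ a / q * Spoly q t.
Proof.
rewrite /Rpoly /Spoly; have := col0_Mq_cons q a t; rewrite iter_Rq_col /col0 => -[-> _].
by rewrite /=; ring.
Qed.

Lemma Spoly_cons q a t : Spoly q (a :: t) = Rpoly q t.
Proof.
by rewrite /Rpoly /Spoly; have := col0_Mq_cons q a t; rewrite iter_Rq_col /col0 => -[_ ->].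
Qed.

Lemma Rpoly_cons2 q a b t :
  Rpoly q (a :: b :: t) = qnat q a * Rpoly q (b :: t) - q ^+ a / q * Rpoly q t.
Proof. by rewrite Rpoly_cons Spoly_cons. Qed.

End FirstColumn.

Section LinearRecurrence.
Variables (R : pzRingType) (a b u0 u1 : R).

Fixpoint linrec k : R :=
  match k with
  | 0 => u0
  | 1 => u1
  | (k'.+1 as k1).+1 => a * linrec k1 + b * linrec k'
  end.

Lemma linrecSS k : linrec k.+2 = a * linrec k.+1 + b * linrec k.
Proof. by []. Qed.

End LinearRecurrence.

Lemma rmorph_linrec (R S : pzRingType) (f : {rmorphism R -> S}) a b u0 u1 k :
  f (linrec a b u0 u1 k) = linrec (f a) (f b) (f u0) (f u1) k.
Proof. by elim/ltn_ind: k => -[|[|k]] IH //; rewrite !linrecSS rmorphD !rmorphM !IH. Qed.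

Lemma linrec_scale (R : comPzRingType) (c a b u0 u1 : R) k :
  linrec (c * a) (c ^+ 2 * b) u0 (c * u1) k = c ^+ k * linrec a b u0 u1 k.
Proof.
elim/ltn_ind: k => -[|[|k]] IH; rewrite ?mul1r //.
by rewrite !linrecSS !IH // !exprS; ring.
Qed.

Lemma linrec_cheb_incr (R : realDomainType) (t : R) : 2 <= t ->
  forall k, 1 <= linrec t (-1) 1 t k /\ linrec t (-1) 1 t k + 1 <= linrec t (-1) 1 t k.+1.
Proof.
move=> t_ge2; elim=> [|k [IH1 IH2]]; first by split=> /=; lra.
by rewrite linrecSS; split; [lra | nra].
Qed.

Lemma linrec_cheb_inj (R : realDomainType) (t : R) :
  2 <= t -> injective (linrec t (-1) 1 t).
Proof.
move=> t_ge2; apply/inc_inj/le_mono/Order.NatMonotonyTheory.homo_ltn_lt => k.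
by have [_] := linrec_cheb_incr t_ge2 k; lra.
Qed.

Lemma Rpoly_nseq2 (F : fieldType) (q : F) k : q != 0 -> Rpoly q (nseq k 2) = qnat q k.+1.
Proof.
move=> q_neq0; elim/ltn_ind: k => -[|[|k]] IH.
- by rewrite Rpoly_nil qnatS qnat0 mulr0 addr0.
- by rewrite Rpoly_cons Rpoly_nil Spoly_nil !qnatS qnat0; ring.
rewrite Rpoly_cons2 (IH k.+1) // (IH k) // (qnatSr q k.+2) (qnatSr q k.+1) !qnatS qnat0.
by rewrite !exprS; field.
Qed.

Lemma Rpoly_nseq3 (F : fieldType) (q : F) k :
  q != 0 -> Rpoly q (nseq k 3) = linrec (qnat q 3) (- q ^+ 2) 1 (qnat q 3) k.
Proof.
move=> q_neq0; elim/ltn_ind: k => -[|[|k]] IH.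
- exact: Rpoly_nil.
- by rewrite Rpoly_cons Rpoly_nil Spoly_nil /=; ring.
rewrite Rpoly_cons2 (IH k.+1) // (IH k) // linrecSS.
by rewrite !exprS; field.
Qed.

Lemma negcf_gt1 c : (0 < size c)%N -> all (leq 2) c -> 1 < negcf c.
Proof.
elim: c => [//|a [|b t] IH] _ /= /andP[a_ge2 t_ge2]; first by rewrite ltr1n.
have := IH isT t_ge2; set y := negcf (b :: t) => y_gt1.
have : y^-1 < 1 by rewrite invf_lt1 ?(lt_trans ltr01).
have : 2%:R <= a%:R :> rat by rewrite ler_nat.
lra.
Qed.

Lemma S_values_nseq (z : CC) m k : (2 <= m)%N -> S_values z (Rpoly z (nseq k m)).
Proof.
move=> m_ge2; have c_ge2 : all (leq 2) (nseq k.+1 m) by rewrite all_nseq m_ge2 orbT.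
exists (negcf (nseq k.+1 m)), (nseq k.+1 m).
by split; [exact: negcf_gt1 | split; [by [] | rewrite Spoly_cons]].
Qed.

Lemma not_finite_subset_inj (A : CC -> Prop) (f : nat -> CC) :
  injective f -> (forall k, A (f k)) -> ~ finite_subset A.
Proof.
move=> f_inj Af [l in_l]; set s := [seq f k | k <- iota 0 (size l).+1].
have : (size s <= size l)%N.
  by apply: uniq_leq_size => [|_ /mapP[k _ ->]]; rewrite ?map_inj_uniq ?iota_uniq ?in_l.
by rewrite size_map size_iota ltnn.
Qed.

Lemma qnat_succ_inj (R : idomainType) (q : R) : q != 0 ->
  (forall m, (0 < m)%N -> qnat q m != 0) -> injective (fun k => qnat q k.+1).
Proof.
move=> q_neq0 no_root j k; wlog le_jk : j k / (j <= k)%N => [hw|].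
  by case: (leqP j k) => [/hw //|/ltnW /hw h /esym /h].
move=> /= eq_jk; apply/eqP; rewrite eqn_leq le_jk leqNgt; apply/negP => lt_jk.
move: eq_jk; rewrite -(subnKC (ltnW lt_jk : (j.+1 <= k.+1)%N)) qnatD subSS.
rewrite -{1}[qnat q j.+1]addr0 => /addrI /esym /eqP.
by rewrite mulf_eq0 expf_eq0 (negbTE q_neq0) andbF (negbTE (no_root _ _)) // subn_gt0.
Qed.

Lemma S_values_infinite_qnat_neq0 (z : CC) : z != 0 ->
  (forall m, (0 < m)%N -> qnat z m != 0) -> ~ finite_subset (S_values z).
Proof.
move=> z_neq0 no_root; apply: (not_finite_subset_inj (qnat_succ_inj z_neq0 no_root)) => k.
by rewrite /= -Rpoly_nseq2 //; apply: S_values_nseq.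
Qed.

Section UnitCircle.
Local Open Scope complex_scope.
Variable R : rcfType.

Lemma Rpoly_nseq3_unit_circle (a b : R) k : a ^+ 2 + b ^+ 2 = 1 ->
  Rpoly (a +i* b) (nseq k 3) =
  (a +i* b) ^+ k * (linrec (1 + 2 * a) (-1) 1 (1 + 2 * a) k)%:C.
Proof.
move=> ab1; set w := a +i* b; set t := 1 + 2 * a.
have w_neq0 : w != 0 by apply/eqP => -[a0 b0]; move: ab1; rewrite a0 b0; lra.
have qnat_w : qnat w 3 = w * t%:C.
  rewrite !qnatS qnat0; apply/eqP; rewrite eq_complex /= /t; simpc.
  by apply/andP; split; apply/eqP; nra.
rewrite Rpoly_nseq3 // qnat_w -[- w ^+ 2]mulrN1 linrec_scale.
by rewrite rmorph_linrec rmorphN1 rmorph1.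
Qed.

Lemma Rpoly_nseq3_inj (a b : R) : a ^+ 2 + b ^+ 2 = 1 -> 1 <= 2 * a ->
  injective (fun k => Rpoly (a +i* b) (nseq k 3)).
Proof.
move=> ab1 a_ge; have t_ge2 : 2 <= 1 + 2 * a by lra.
have norm_w : `|a +i* b| = 1 by rewrite normc_def /= ab1 sqrtr1.
have normU k : `|(linrec (1 + 2 * a) (-1) 1 (1 + 2 * a) k)%:C| =
                (linrec (1 + 2 * a) (-1) 1 (1 + 2 * a) k)%:C.
  by apply: ger0_norm; rewrite ler0c; have [U_ge1 _] := linrec_cheb_incr t_ge2 k; lra.
move=> j k /(congr1 Num.norm); rewrite /= !Rpoly_nseq3_unit_circle //.
rewrite !normrM !normrX norm_w !expr1n !mul1r !normU.
by move/complexI/(linrec_cheb_inj t_ge2).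
Qed.

End UnitCircle.

Lemma map_prod_Cyclotomic (R : idomainType) n : (0 < n)%N ->
  \prod_(d <- divisors n) map_poly (intr : int -> R) 'Phi_d = 'X^n - 1.
Proof.
by move=> n_gt0; rewrite -rmorph_prod prod_Cyclotomic // rmorphB rmorph1 /= map_polyXn.
Qed.

Lemma unity_root_Cyclotomic (R : idomainType) d (y : R) : (0 < d)%N ->
  (y ^+ d == 1) = has (fun e => root (map_poly intr 'Phi_e) y) (divisors d).
Proof.
move=> d_gt0; have -> : (y ^+ d == 1) = root ('X^d - 1) y by rewrite rootE !hornerE subr_eq0.
rewrite -map_prod_Cyclotomic // -(big_map (fun e => map_poly intr 'Phi_e) xpredT idfun).
by rewrite -[root _ y]negbK root_bigmul -has_predC has_map; apply: eq_has => e /=; rewrite negbK.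
Qed.

Lemma root_Cyclotomic (R : idomainType) n (z : R) :
  n.-primitive_root z -> root (map_poly intr 'Phi_n) z.
Proof.
move=> prim; have n_gt0 := prim_order_gt0 prim.
move/eqP: (prim_expr_order prim); rewrite unity_root_Cyclotomic // => /hasP[d d_n Phi_d_z].
have d_dvd_n : (d %| n)%N by rewrite dvdn_divisors.
have d_gt0 : (0 < d)%N := dvdn_gt0 n_gt0 d_dvd_n.
have : z ^+ d == 1.
  by rewrite unity_root_Cyclotomic //; apply/hasP; exists d; rewrite // -dvdn_divisors.
rewrite -(prim_order_dvd prim) => n_dvd_d.
by suff -> : n = d by []; apply/eqP; rewrite eqn_dvd n_dvd_d.
Qed.

Lemma map_ratr_Cyclotomic (F : numFieldType) n :
  map_poly ratr (map_poly intr 'Phi_n : {poly rat}) = map_poly intr 'Phi_n :> {poly F}.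
Proof. by rewrite -map_poly_comp; apply: eq_map_poly => a /=; rewrite ratr_int. Qed.

(* The gcd of p and Phi_n has a root w in algC; w is a primitive n-th root of
   unity, whose minimal polynomial over Q is Phi_n. *)
Lemma Cyclotomic_dvdp (F : numFieldType) n (z : F) (p : {poly rat}) :
  n.-primitive_root z -> root (map_poly ratr p) z -> map_poly intr 'Phi_n %| p.
Proof.
move=> prim root_p; set Phi : {poly rat} := map_poly intr 'Phi_n.
have : ~~ coprimep p Phi.
  rewrite -(coprimep_map (ratr : {rmorphism rat -> F})).
  apply: contraL (root_Cyclotomic prim) => cop.
  by rewrite -(map_ratr_Cyclotomic F) /root; apply: coprimep_root cop root_p.
rewrite -(coprimep_map (ratr : {rmorphism rat -> algC})) /coprimep => /closed_rootP[w].
rewrite root_gcd map_ratr_Cyclotomic => /andP[root_p_w Phi_w].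
have [zc prim_zc] := C_prim_root_exists (prim_order_gt0 prim).
have prim_w : n.-primitive_root w.
  by rewrite -(root_cyclotomic prim_zc) -(Cintr_Cyclotomic prim_zc).
have [p0 [min_w _] dvd_min] := minCpolyP w.
suff -> : Phi = p0 by rewrite -dvd_min.
apply: (map_inj_poly (fmorph_inj (ratr : {rmorphism rat -> algC}))); first exact: rmorph0.
by rewrite map_ratr_Cyclotomic -min_w (minCpoly_cyclotomic prim_w) (Cintr_Cyclotomic prim_w).
Qed.

Lemma root_ratr_prim_root (F K : numFieldType) n (z : F) (w : K) (p : {poly rat}) :
  n.-primitive_root z -> n.-primitive_root w ->
  root (map_poly ratr p) z -> root (map_poly ratr p) w.
Proof.
move=> prim_z prim_w /(Cyclotomic_dvdp prim_z) /dvdpP[r ->].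
by rewrite rmorphM rootM /= map_ratr_Cyclotomic root_Cyclotomic ?orbT.
Qed.

Definition cis (x : R) : CC := Complex (cos x) (sin x).

Lemma PI2E : PI *+ 2 = Rmult (IZR 2) PI.
Proof. by rewrite mulr2n; apply: Rplus_diag. Qed.

Lemma PI_gt0 : 0 < PI.
Proof. exact/RltP/PI_RGT_0. Qed.

Lemma cis_natmul x k : cis x ^+ k = cis (k%:R * x)%R.
Proof.
elim: k => [|k IHk]; first by rewrite expr0 mul0r /cis cos_0 sin_0.
rewrite exprS IHk; apply/eqP; rewrite eq_complex /= -natr1 mulrDl mul1r cosD sinD.
by apply/andP; split; apply/eqP; ring.
Qed.

Lemma cis_neq1 x : 0 < x -> x < PI *+ 2 -> cis x != 1.
Proof.
move=> x_gt0 x_lt; apply/negP => /eqP[cos_x sin_x].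
have [x_le | x_gt] := lerP x PI.
  have : Rdefinitions.Rlt (cos x) (cos 0).
    by apply: cos_decreasing_1; apply/RleP || apply/RltP; rewrite ?lexx // ltW // PI_gt0.
  by rewrite cos_x cos_0 => /RltP; rewrite ltxx.
have : Rdefinitions.Rlt (sin x) 0 by apply: sin_lt_0; apply/RltP; rewrite // -PI2E.
by rewrite sin_x => /RltP; rewrite ltxx.
Qed.

Lemma cis_prim_root n : (0 < n)%N -> n.-primitive_root (cis (PI *+ 2 / n%:R)%R).
Proof.
move=> n_gt0; have n_neq0 : (n%:R : R) != 0 by rewrite pnatr_eq0 -lt0n.
have [m prim_m m_dvd] : {m | m.-primitive_root (cis (PI *+ 2 / n%:R)%R) & (m %| n)%N}.
  apply: prim_order_exists => //; rewrite cis_natmul mulrCA mulfV // mulr1.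
  by rewrite PI2E /cis cos_2PI sin_2PI.
suff m_n : m = n by rewrite m_n in prim_m.
have m_gt0 := prim_order_gt0 prim_m; apply/eqP; rewrite eqn_leq dvdn_leq //=.
rewrite leqNgt; apply/negP => m_lt; move: (prim_expr_order prim_m); rewrite cis_natmul.
apply/eqP/cis_neq1; first by rewrite mulr_gt0 ?divr_gt0 ?mulrn_wgt0 ?ltr0n ?PI_gt0.
by rewrite mulrCA gtr_pMr ?mulrn_wgt0 ?PI_gt0 // ltr_pdivrMr ?ltr0n // mul1r ltr_nat.
Qed.

Lemma cos_2PI_div_ge_half n : (6 <= n)%N -> 1 <= 2 * cos (PI *+ 2 / n%:R)%R.
Proof.
move=> n_ge6; set th := (PI *+ 2 / n%:R)%R; set p3 := (PI / 3%:R)%R.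
have n_gt0 : (0 < n)%N by apply: leq_trans n_ge6.
have th_gt0 : 0 < th by rewrite divr_gt0 ?mulrn_wgt0 ?PI_gt0 ?ltr0n.
have th_le : th <= p3.
  rewrite /th /p3 ler_pdivrMr ?ltr0n // mulrAC ler_pdivlMr ?ltr0n //.
  have : 6%:R <= n%:R :> R by rewrite ler_nat.
  by have := PI_gt0; rewrite -mulr_natl; nra.
have p3_le : p3 <= PI by rewrite /p3 ler_pdivrMr ?ltr0n //; have := PI_gt0; lra.
have cos_p3 : cos p3 = 2%:R^-1.
  by have := cos_PI3; rewrite !RdivE !IZRposE !INRE /= mul1r.
have : cos p3 <= cos th.
  have [-> // | th_lt] := eqVneq th p3.
  apply/ltW/RltP; apply: cos_decreasing_1; apply/RleP || apply/RltP.
  - exact: ltW.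
  - exact: le_trans th_le p3_le.
  - by rewrite /p3 divr_ge0 ?ltW ?PI_gt0.
  - exact: p3_le.
  - by rewrite lt_neqAle th_lt th_le.
by rewrite cos_p3; lra.
Qed.

Lemma cos2_add_sin2 x : cos x ^+ 2 + sin x ^+ 2 = 1.
Proof. by have := sin2_cos2 x; rewrite /Rsqr !RmultE RplusE -!expr2 addrC. Qed.

Definition X3poly k : {poly rat} := linrec (qnat 'X 3) (- 'X ^+ 2) 1 (qnat 'X 3) k.

Lemma horner_X3poly (F : numFieldType) (q : F) k :
  q != 0 -> (map_poly ratr (X3poly k)).[q] = Rpoly q (nseq k 3).
Proof.
move=> q_neq0.
have cq : commr_rmorph (ratr : {rmorphism rat -> F}) q by move=> a; apply: mulrC.
rewrite Rpoly_nseq3 // -[_.[q]]/(horner_morph cq (X3poly k)) rmorph_linrec rmorph_qnat.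
by rewrite rmorphN rmorphXn rmorph1 /= horner_morphX.
Qed.

Lemma prim_root_neq0 (R : idomainType) n (z : R) : n.-primitive_root z -> z != 0.
Proof.
move=> prim; apply: contra_eq_neq (prim_expr_order prim) => ->.
by rewrite expr0n gtn_eqF ?(prim_order_gt0 prim) // eq_sym oner_eq0.
Qed.

Lemma Rpoly_nseq3_prim_root (F K : numFieldType) n (z : F) (w : K) j k :
  n.-primitive_root z -> n.-primitive_root w ->
  Rpoly z (nseq j 3) = Rpoly z (nseq k 3) -> Rpoly w (nseq j 3) = Rpoly w (nseq k 3).
Proof.
move=> prim_z prim_w eq_z; apply/eqP; rewrite -subr_eq0.
have := root_ratr_prim_root (p := X3poly j - X3poly k) prim_z prim_w.
rewrite /root !rmorphB !hornerE.
rewrite !horner_X3poly ?(prim_root_neq0 prim_z) ?(prim_root_neq0 prim_w) //.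
by rewrite eq_z subrr; apply.
Qed.

Lemma S_values_infinite_prim_root (zeta : CC) n :
  (6 <= n)%N -> n.-primitive_root zeta -> ~ finite_subset (S_values zeta).
Proof.
move=> n_ge6 prim; have prim_w := cis_prim_root (leq_trans (isT : (0 < 6)%N) n_ge6).
apply: (@not_finite_subset_inj _ (fun k => Rpoly zeta (nseq k 3))) => [j k eq_jk | k].
  2: exact: S_values_nseq.
apply: (Rpoly_nseq3_inj (cos2_add_sin2 _) (cos_2PI_div_ge_half n_ge6)).
exact: Rpoly_nseq3_prim_root prim prim_w eq_jk.
Qed.

Fixpoint vadd (x y : seq int) : seq int :=
  match x, y with
  | a :: x', b :: y' => a + b :: vadd x' y'
  | [::], _ => y
  | _, [::] => x
  end.

Definition vopp (x : seq int) : seq int := map -%R x.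

(* An element of Z[x]/([n]_x) is stored as its n - 1 coefficients.  As
   x^(n-1) = -(1 + x + ... + x^(n-2)) there, multiplication by x shifts the
   coefficients up and subtracts the top one from all of them. *)
Definition vmulX (x : seq int) : seq int := [seq b - last 0 x | b <- belast 0 x].

Lemma size_vadd x y : size (vadd x y) = maxn (size x) (size y).
Proof. by elim: x y => [|a x IHx] [|b y] //=; rewrite IHx maxnSS. Qed.

Lemma size_vmulX x : size (vmulX x) = size x.
Proof. by rewrite size_map size_belast. Qed.

Lemma size_iter_vmulX k x : size (iter k vmulX x) = size x.
Proof. by elim: k => // k IHk; rewrite iterS size_vmulX. Qed.

Definition vstart n : seq int * seq int := (1 :: nseq n.-2 0, nseq n.-1 0).

Definition vR (v : seq int * seq int) := (vadd (vmulX v.1) v.2, v.2).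

(* S_q on first columns, with q^-1 computed as q^(n-1). *)
Definition vS n (v : seq int * seq int) := (vopp (iter n.-1 vmulX v.2), v.1).

Definition vsucc n v := [seq iter r vR (vS n v) | r <- iota 0 n].

Definition orbit n fuel :=
  iter fuel (fun V => undup (V ++ flatten (map (vsucc n) V))) [:: vstart n].

Definition closed_orbit n V :=
  (vstart n \in V) && all (fun v => all (mem V) (vsucc n v)) V.

(* Six rounds suffice: the orbits have 6, 24, 48 and 120 elements. *)
Lemma closed_orbit_2345 : all (fun n => closed_orbit n (orbit n 6)) [:: 2; 3; 4; 5]%N.
Proof. by vm_compute. Qed.

Section Evaluation.
Variables (F : fieldType) (z : F).

Definition evalv (x : seq int) : F := foldr (fun a s => a%:~R + z * s) 0 x.

Lemma evalv_add x y : evalv (vadd x y) = evalv x + evalv y.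
Proof. by elim: x y => [|a x IHx] [|b y] /=; rewrite ?add0r ?addr0 // IHx rmorphD; ring. Qed.

Lemma evalv_opp x : evalv (vopp x) = - evalv x.
Proof. by elim: x => [|a x /= ->]; rewrite ?oppr0 // mulrN intrN opprD. Qed.

Lemma evalv_rcons x a : evalv (rcons x a) = evalv x + a%:~R * z ^+ size x.
Proof.
by elim: x => [|b x /= ->]; rewrite /= ?mulr0 ?addr0 ?expr0 ?mulr1 ?add0r // exprS; ring.
Qed.

Lemma evalv_subr x c : evalv [seq b - c | b <- x] = evalv x - c%:~R * qnat z (size x).
Proof. by elim: x => [|b x /= ->]; rewrite /= ?qnat0 ?mulr0 ?subr0 // qnatS intrB; ring. Qed.

Lemma evalv_nseq0 m : evalv (nseq m 0) = 0.
Proof. by elim: m => [|m /= ->]; rewrite // mulr0 addr0. Qed.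

Variable n : nat.
Hypotheses (n_gt1 : (1 < n)%N) (qnat_n : qnat z n = 0).

Lemma evalv_mulX x : size x = n.-1 -> evalv (vmulX x) = z * evalv x.
Proof.
case/lastP: x => [|y a]; first by rewrite mulr0.
rewrite size_rcons => size_y.
have qnat_y : qnat z (size y).+1 = - z ^+ (size y).+1.
  by apply/eqP; rewrite -addr_eq0 -qnatSr size_y prednK ?qnat_n // ltnW.
by rewrite /vmulX last_rcons belast_rcons evalv_subr evalv_rcons /= qnat_y exprS; ring.
Qed.

Lemma evalv_iter_mulX k x : size x = n.-1 -> evalv (iter k vmulX x) = z ^+ k * evalv x.
Proof.
move=> size_x; elim: k => [|k /= IHk]; first by rewrite mul1r.
by rewrite evalv_mulX ?size_iter_vmulX // IHk exprS mulrA.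
Qed.

Definition encodes (v : seq int * seq int) (p : F * F) :=
  [/\ size v.1 = n.-1, size v.2 = n.-1 & (evalv v.1, evalv v.2) = p].

Lemma encodes_vstart : encodes (vstart n) (1, 0).
Proof.
have n1_gt0 : (0 < n.-1)%N by rewrite -ltnS prednK // ltnW.
by split; rewrite /= ?size_nseq ?prednK ?evalv_nseq0 ?mulr0 ?addr0.
Qed.

Lemma encodes_vR v p : encodes v p -> encodes (vR v) (Rq_col z p).
Proof.
case=> size1 size2 <-; split=> //=.
  by rewrite size_vadd size_vmulX size1 size2 maxnn.
by rewrite evalv_add evalv_mulX.
Qed.

Lemma encodes_vS v p : encodes v p -> encodes (vS n v) (Sq_col z p).
Proof.
case=> size1 size2 <-; split=> //=; first by rewrite size_map size_iter_vmulX.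
have zV : z^-1 = z ^+ n.-1.
  by apply: mulr1_eq; rewrite -exprS prednK ?(qnat_eq0_exprn qnat_n) // ltnW.
by rewrite evalv_opp evalv_iter_mulX // /Sq_col zV.
Qed.

Lemma iter_Rq_col_mod a p : iter a (Rq_col z) p = iter (a %% n) (Rq_col z) p.
Proof.
have iter_n q : iter n (Rq_col z) q = q.
  by rewrite iter_Rq_col (qnat_eq0_exprn qnat_n) qnat_n mul1r mul0r addr0; case: q.
rewrite {1}(divn_eq a n) addnC iterD; congr iter; elim: (a %/ n)%N => //= m IHm.
by rewrite mulSn iterD IHm iter_n.
Qed.

Lemma closed_orbit_col0 V : closed_orbit n V ->
  forall c, exists2 v, v \in V & encodes v (col0 (Mq z c)).
Proof.
case/andP=> start_V /allP closed_V; elim=> [|a t [v v_V enc_v]].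
  by exists (vstart n); rewrite // col0_Mq_nil; exact: encodes_vstart.
exists (iter (a %% n) vR (vS n v)).
  apply: (allP (closed_V v v_V)); apply/mapP; exists (a %% n)%N => //.
  by rewrite mem_iota add0n ltn_mod (ltnW n_gt1).
rewrite col0_Mq_cons iter_Rq_col_mod.
by elim: (a %% n)%N => [|r IHr] /=; [exact: encodes_vS | exact: encodes_vR].
Qed.

End Evaluation.

Lemma S_values_finite_qnat_eq0 (z : CC) n :
  n \in [:: 2; 3; 4; 5]%N -> qnat z n = 0 -> finite_subset (S_values z).
Proof.
move=> n_small qnat_n.
have n_gt1 : (1 < n)%N by move: n_small; rewrite !inE => /or4P[] /eqP->.
have closed : closed_orbit n (orbit n 6) by move/allP: closed_orbit_2345; apply.
exists [seq evalv z v.2 | v <- orbit n 6] => _ [x [c [_ [_ ->]]]].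
have [v v_in [_ _ ev]] := closed_orbit_col0 n_gt1 qnat_n closed c.
by apply/mapP; exists v => //; case: ev.
Qed.

Theorem corollary4p2 (zeta : CC) (hzeta : zeta != 0) :
  finite_subset (S_values zeta) <->
  exists n : nat, (n \in [:: 2; 3; 4; 5]%N) /\ n.-primitive_root zeta.
Proof.
split=> [fin | [n [n_small prim]]]; last first.
  have n_gt1 : (1 < n)%N by move: n_small; rewrite !inE => /or4P[] /eqP->.
  exact: S_values_finite_qnat_eq0 n_small (qnat_prim_root_eq0 prim n_gt1).
have [[m m_gt0 qnat_m] | no_root] := classic (exists2 m, (0 < m)%N & qnat zeta m = 0).
  have [n n_gt1 prim] := qnat_eq0_prim_root m_gt0 qnat_m.
  exists n; split=> //; have n_le5 : (n <= 5)%N.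
    by rewrite leqNgt; apply/negP => n_gt5; exact: S_values_infinite_prim_root n_gt5 prim fin.
  by move: n_gt1 n_le5; rewrite !inE; case: n {prim} => [|[|[|[|[|[|]]]]]].
exfalso; apply: S_values_infinite_qnat_neq0 hzeta _ fin => m m_gt0.
by apply/eqP => qnat_m; apply: no_root; exists m.
Qed.
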